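(* Let $n\ge 2$, $m=qn$ with $q$ a positive integer, and assume $m\ge N:=67584n^3\log^2 m+25216n^4\log m+2354n^5+128n^2\log m+24n^3+3n^2+n$. Let $\pi_1,\dots,\pi_n$ be independent uniformly random orderings of the items and run Give-Away Round-Robin. Then for every agent $i$, $$\Pr\Big[\bigcup_{k<32\log m+4n}\ \bigcup_{j\ne i}\mathcal{E}^{ij}_k\Big]\le \frac{2048n^2\log^2 m+640n^3\log m+50n^4}{m}.$$
   Context: Logarithms are natural. Give-Away Round-Robin: Phase 1: for $i=1,\dots,n$ in order, and for each $j\ne i$ in increasing order, agent $i$ gives agent $j$ the unallocated item ranked lowest in $\pi_i$. Phase 2: Round-Robin on the remaining items: agents take turns in order $1,\dots,n,1,\dots,n,\dots$, on her turn agent $i$ takes the unallocated item ranked highest in $\pi_i$, until all items are allocated; final bundles $A_1,\dots,A_n$ each have $q$ items. $g\succ_i g'$ means $g$ is ranked above $g'$ in $\pi_i$; $b_{jk}$ is the $k$-th best item of $A_j$ according to $\pi_i$; $\mathcal{E}^{ij}_k$ is the event $b_{jk}\succ_i b_{ik}$ (defined for all $j\ne i$). *)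

From mathcomp Require Import all_boot all_order all_algebra all_fingroup.
From mathcomp Require Import reals exp.

Set Implicit Arguments.
Unset Strict Implicit.
Unset Printing Implicit Defensive.

(* Items are 'I_m, agents are 'I_n (agent 1 of the paper = ordinal 0).
   An ordering pi : {perm 'I_m} maps an item g to its rank (pi g),
   rank 0 being the best; g >-_i g' iff pi_i g < pi_i g'. *)

Section GARR.
Variables (n m : nat).

Definition profile := {ffun 'I_n -> {perm 'I_m}}.
Definition alloc := {ffun 'I_m -> option 'I_n}.

Definition unallocated (A : alloc) : {set 'I_m} := [set g | A g == None].

Definition best_in (p : {perm 'I_m}) (U : {set 'I_m}) : option 'I_m :=
  [pick g in U | [forall h in U, (p g <= p h)%N]].
Definition worst_in (p : {perm 'I_m}) (U : {set 'I_m}) : option 'I_m :=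
  [pick g in U | [forall h in U, (p h <= p g)%N]].

(* one step: (chooser c, receiver r, give) : if give, c gives r the
   worst unallocated item for pi_c; otherwise c (= r) takes her best. *)
Definition step (P : profile) (A : alloc) (s : 'I_n * 'I_n * bool) : alloc :=
  let: (c, r, give) := s in
  let pick := if give then worst_in (P c) (unallocated A)
              else best_in (P c) (unallocated A) in
  if pick is Some g0 then [ffun g => if g == g0 then Some r else A g]
  else A.

Definition phase1_steps : seq ('I_n * 'I_n * bool) :=
  flatten [seq [seq (i, j, true) | j <- enum 'I_n & j != i] | i <- enum 'I_n].

(* Phase 2: round robin 1..n,1..n,... ; steps after all items are
   allocated do nothing, so m rounds are (more than) enough. *)
Definition phase2_steps : seq ('I_n * 'I_n * bool) :=
  flatten (nseq m [seq (i, i, false) | i <- enum 'I_n]).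

Definition GARR (P : profile) : alloc :=
  foldl (step P) [ffun => None] (phase1_steps ++ phase2_steps).

Definition bundle (P : profile) (j : 'I_n) : {set 'I_m} :=
  [set g | GARR P g == Some j].

(* k-th best item (k >= 1) of a set according to pi; None if it has < k items *)
Definition kth_best (p : {perm 'I_m}) (S : {set 'I_m}) (k : nat) : option 'I_m :=
  nth None [seq Some g | g <- sort (fun g h => (p g <= p h)%N) (enum S)] k.-1.

(* event E^{ij}_k : b_{jk} >-_i b_{ik}, with b_{jk} the k-th best item of
   A_j according to pi_i *)
Definition event_E (P : profile) (i j : 'I_n) (k : nat) : bool :=
  match kth_best (P i) (bundle P j) k, kth_best (P i) (bundle P i) k with
  | Some bj, Some bi => (P i bj < P i bi)%N
  | _, _ => false
  end.

End GARR.

From mathcomp Require Import all_boot all_order all_algebra all_fingroup.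
From mathcomp Require Import reals exp.
From mathcomp Require Import zify lra.
Import Order.TTheory GRing.Theory Num.Theory.
Set Implicit Arguments.
Unset Strict Implicit.
Unset Printing Implicit Defensive.

(* Let K be the integer part of 32 ln m + 4n and M = n^2 + Kn.  While fewer
   than M items are allocated, the best free item of any agent has rank below M
   and her worst free item has rank at least m - M.  So if every agent c <> i
   ranks each of agent i's K best items in the band [M, m - M), nobody but i
   touches them during phase 1 and the first K rounds of phase 2, and i takes
   exactly them with her first K picks; for k <= K the k-th best item of A_i is
   then her k-th best item overall, and no event E^{ij}_k occurs.  The band
   condition fails only if some c <> i puts i's item of some rank s < K at one
   of 2M ranks; as pi_c pi_i^-1 is uniform, each of these at most nK(2M)
   triples has probability 1/m, and the union bound gives the claim. *)

Lemma card_ord_lt m b : #|[set r : 'I_m | r < b]| = minn b m.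
Proof.
rewrite -sum1dep_card; elim: m => [|m IH]; first by rewrite big_ord0 minn0.
by rewrite big_mkcond big_ord_recr /= -big_mkcond IH; case: ltnP; lia.
Qed.

Lemma count_enum (T : finType) (A a : {pred T}) : count a (enum A) = #|[predI A & a]|.
Proof.
rewrite cardE -size_filter /enum_mem -filter_predI.
by apply: congr1; apply: eq_filter => x; rewrite !inE andbC.
Qed.

Lemma card_bigcup_le (T I : finType) (X : {set I}) (S : I -> {set T}) :
  #|\bigcup_(x in X) S x| <= \sum_(x in X) #|S x|.
Proof.
elim/big_ind2: _ => [|k1 U1 k2 U2 ? ?|//]; first by rewrite cards0.
by apply: leq_trans (leq_card_setU U1 U2) _; apply: leq_add.
Qed.

Section Ranks.
Variables (m : nat) (p : {perm 'I_m}).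

Lemma card_rank_lt b : b <= m -> #|[set g | p g < b]| = b.
Proof.
move=> bm; have -> : [set g | p g < b] = p @^-1: [set r : 'I_m | r < b].
  by apply/setP => g; rewrite !inE.
by rewrite card_preimset ?card_ord_lt ?(minn_idPl bm) //; apply: perm_inj.
Qed.

Lemma best_in_rank U g : best_in p U = Some g -> g \in U /\ p g <= #|~: U|.
Proof.
rewrite /best_in; case: pickP => // x /andP [xU /forallP x_min] [<-]; split => //.
rewrite -(card_rank_lt (ltnW (ltn_ord (p x)))).
apply/subset_leq_card/subsetP => h; rewrite !inE ltnNge; apply: contra => hU.
by have := x_min h; rewrite hU.
Qed.

Lemma worst_in_rank U g : worst_in p U = Some g -> g \in U /\ m <= (p g + #|~: U|).+1.
Proof.
rewrite /worst_in; case: pickP => // x /andP [xU /forallP x_max] [<-]; split => //.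
have : #|U| <= (p x).+1.
  rewrite -(card_rank_lt (ltn_ord (p x))).
  apply/subset_leq_card/subsetP => h hU; rewrite inE ltnS.
  by have := x_max h; rewrite hU.
by have := cardsC U; rewrite card_ord; lia.
Qed.

Lemma best_in_next (U : {set 'I_m}) (r : 'I_m) :
  (forall g, p g < r -> g \notin U) -> (p^-1)%g r \in U -> best_in p U = Some ((p^-1)%g r).
Proof.
move=> below_out rU; rewrite /best_in; case: pickP => [x /andP [xU /forallP x_min]|].
  congr Some; apply: (@perm_inj _ p); apply/val_inj; rewrite permKV /=.
  have := x_min ((p^-1)%g r); rewrite rU permKV /= => xr.
  by apply/eqP; rewrite eqn_leq xr leqNgt; apply: contraL xU => /below_out.
move/(_ ((p^-1)%g r)); rewrite rU /=; move/negbT/negP; case; apply/forallP => h.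
by apply/implyP => hU; rewrite permKV leqNgt; apply: contraL hU => /below_out.
Qed.

Lemma index_sorted_rank s g : sorted (fun g h => p g <= p h) s -> uniq s -> g \in s ->
  index g s = count (fun h => p h < p g) s.
Proof.
elim: s => [|x s IH] //= x_s /andP [xs us]; rewrite in_cons.
have s_ge : all (fun h => p x <= p h) s.
  by apply: order_path_min x_s => a b c; apply: leq_trans.
have {}IH := IH (path_sorted x_s) us.
case: eqP => [-> _ | /eqP gx /= gs]; last first.
  have xg : p x < p g.
    rewrite ltn_neqAle (allP s_ge g gs) andbT val_eqE.
    by apply: contra gx => /eqP /perm_inj ->.
  by rewrite eq_sym (negbTE gx) xg IH.
rewrite eqxx ltnn (@eq_in_count _ _ pred0) ?count_pred0 // => h /(allP s_ge) /=.
by rewrite ltnNge => ->.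
Qed.

Lemma kth_best_rank (S : {set 'I_m}) k b :
  kth_best p S k = Some b -> k.-1 = #|[predI S & [pred h | p h < p b]]|.
Proof.
rewrite /kth_best; set s := sort _ _ => kb.
have k_lt : k.-1 < size s.
  by rewrite ltnNge; apply/negP => big; move: kb; rewrite nth_default ?size_map.
have b_def : nth b s k.-1 = b by move: kb; rewrite (nth_map b) // => -[].
have us : uniq s by rewrite sort_uniq enum_uniq.
have ss : sorted (fun g h => p g <= p h) s by apply: sort_sorted => x y; apply: leq_total.
have /seq.permP count_s : perm_eq s (enum S) by rewrite perm_sort.
rewrite -count_enum -count_s.
have bs : b \in s by rewrite -b_def mem_nth.
by rewrite -index_sorted_rank // -{1}b_def index_uniq.
Qed.

Lemma kth_best_rank_ge (S : {set 'I_m}) k b : kth_best p S k = Some b -> k.-1 <= p b.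
Proof.
move/kth_best_rank => ->; rewrite -[X in _ <= X](card_rank_lt (ltnW (ltn_ord (p b)))).
by apply/subset_leq_card/subsetP => h; rewrite !inE => /andP [].
Qed.

Lemma kth_best_rank_lt (S : {set 'I_m}) k b : 0 < k <= m ->
  (forall g, p g < k -> g \in S) -> kth_best p S k = Some b -> p b < k.
Proof.
move=> /andP [k_gt0 k_le] top_in /kth_best_rank k_card; rewrite ltnNge; apply/negP => k_le_b.
have : k <= k.-1.
  rewrite k_card -{1}(card_rank_lt k_le); apply/subset_leq_card/subsetP => h.
  by rewrite !inE => hk; rewrite top_in //=; apply: leq_trans hk k_le_b.
lia.
Qed.

End Ranks.

Section Execution.
Variables (n m : nat) (P : profile n m).

Definition allocated (A : alloc n m) := ~: unallocated A.

Definition assign (A : alloc n m) (g : 'I_m) (r : 'I_n) : alloc n m :=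
  [ffun h => if h == g then Some r else A h].

Lemma step_cases A c r (give : bool) :
  step P A (c, r, give) = A \/
  exists2 g, (if give then worst_in (P c) (unallocated A) else best_in (P c) (unallocated A))
               = Some g & step P A (c, r, give) = assign A g r.
Proof. by rewrite /=; case: (if give then _ else _) => [g|]; [right; exists g | left]. Qed.

Lemma card_allocated_step A x : #|allocated (step P A x)| <= #|allocated A|.+1.
Proof.
case: x => [[c r] give]; have [-> // | [g _ ->]] := step_cases A c r give.
apply: leq_trans (_ : #|g |: allocated A| <= _); last by rewrite cardsU1; case: (_ \in _).
by apply/subset_leq_card/subsetP => h; rewrite !inE ffunE; case: (h == g).
Qed.

Lemma step_allocated (A : alloc n m) x g : A g != None -> step P A x g = A g.
Proof.
case: x => [[c r] give] Ag; have [-> // | [h /[swap] -> pick]] := step_cases A c r give.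
rewrite ffunE; case: eqP => // gh; move: pick; rewrite -gh.
case: give => [/worst_in_rank | /best_in_rank] [+ _]; by rewrite inE (negbTE Ag).
Qed.

Lemma foldl_allocated (A : alloc n m) s g : A g != None -> foldl (step P) A s g = A g.
Proof.
by elim: s A => [|x s IH] A Ag //=; rewrite IH step_allocated.
Qed.

End Execution.

Definition give_or_pick n (x : 'I_n * 'I_n * bool) := x.2 || (x.1.1 == x.1.2).

Section Invariant.
Variables (n m : nat) (P : profile n m) (i : 'I_n) (K M : nat).
Hypothesis top_in_middle : forall c g, c != i -> P i g < K -> M <= P c g < m - M.
Hypothesis budget : M + K <= m.

Definition secured r (A : alloc n m) :=
  (forall g, P i g < r -> A g = Some i) /\ (forall g, r <= P i g < K -> A g = None).

Lemma secured_assign_low r A g c :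
  r <= K -> K <= P i g -> secured r A -> secured r (assign A g c).
Proof.
move=> rK Kg [owned free].
split=> h h_rank; rewrite ffunE; case: eqP => [hg | _];
  by [move: h_rank; rewrite hg; lia | apply: owned | apply: free].
Qed.

Lemma secured_pick r A : r < K -> secured r A -> secured r.+1 (step P A (i, i, false)).
Proof.
move=> rK [owned free]; have rm : r < m by lia.
set h := ((P i)^-1)%g (Ordinal rm); have h_rank : P i h = r :> nat by rewrite permKV.
have -> : step P A (i, i, false) = assign A h i.
  rewrite /= (@best_in_next _ _ _ (Ordinal rm)) -/h ?inE ?free ?h_rank ?leqnn //.
  by move=> g /owned Ag; rewrite inE Ag.
have rank_ne g : g != h -> P i g != r :> nat.
  by rewrite -h_rank; apply: contra => /eqP /val_inj /perm_inj ->.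
split=> g g_rank; rewrite ffunE; case: eqP => [gh | /eqP /rank_ne]; rewrite ?gh //.
- by move=> ne; apply: owned; move: g_rank ne; lia.
- by move: g_rank; rewrite gh h_rank; lia.
- by move=> ne; apply: free; move: g_rank ne; lia.
Qed.

Lemma secured_step r A x : give_or_pick x -> #|allocated A| < M ->
  r + (x == (i, i, false)) <= K -> secured r A ->
  secured (r + (x == (i, i, false))) (step P A x).
Proof.
case: x => [[c rcv] give] admissible few_alloc; rewrite /give_or_pick /= in admissible.
have [[-> -> ->] | x_ne] := eqVneq (c, rcv, give) (i, i, false).
  by rewrite addn1; apply: secured_pick.
rewrite addn0 => rK sec.
have [-> // | [g pick ->]] := step_cases P A c rcv give.
apply: secured_assign_low => //; rewrite leqNgt; apply/negP => g_top.
rewrite /allocated in few_alloc.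
have [ci | ci] := eqVneq c i.
- case: give pick admissible x_ne => [/worst_in_rank [_] | _ /eqP].
    by rewrite ci; lia.
  by rewrite ci => <-; rewrite eqxx.
- have := top_in_middle ci g_top.
  by clear admissible x_ne; case: give pick => [/worst_in_rank | /best_in_rank] [_]; lia.
Qed.

Lemma secured_foldl r A s :
  all (@give_or_pick n) s -> #|allocated A| + size s <= M ->
  r + count (pred1 (i, i, false)) s <= K -> secured r A ->
  secured (r + count (pred1 (i, i, false)) s) (foldl (step P) A s).
Proof.
elim: s r A => [|x s IH] r A /=; first by rewrite !addn0 => _ _ _.
move=> /andP [adm_x adm_s] few rK sec; rewrite addnA; apply: IH => //.
- by apply: leq_trans (leq_add (card_allocated_step P A x) (leqnn _)) _; rewrite addSnnS.
- by rewrite -addnA.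
- apply: secured_step => //.
    by apply: leq_trans few; rewrite addnS ltnS leq_addr.
  by apply: leq_trans rK; rewrite addnA leq_addr.
Qed.

End Invariant.

Definition round_steps n : seq ('I_n * 'I_n * bool) := [seq (c, c, false) | c <- enum 'I_n].

Lemma phase2_stepsE n m K : K <= m ->
  phase2_steps n m = flatten (nseq K (round_steps n)) ++ flatten (nseq (m - K) (round_steps n)).
Proof. by move=> Km; rewrite -flatten_cat -nseqD subnKC. Qed.

Lemma size_rounds n K : size (flatten (nseq K (round_steps n))) = K * n.
Proof. by rewrite size_flatten /shape map_nseq sumn_nseq size_map size_enum_ord mulnC. Qed.

Lemma count_rounds n (i : 'I_n) K : count_mem (i, i, false) (flatten (nseq K (round_steps n))) = K.
Proof.
rewrite count_flatten map_nseq sumn_nseq count_map.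
rewrite (eq_count (a2 := pred1 i)) ?count_uniq_mem ?enum_uniq ?mem_enum ?mul1n //.
by move=> c /=; rewrite !xpair_eqE andbT andbb.
Qed.

Lemma size_phase1 n : size (phase1_steps n) <= n * n.
Proof.
rewrite /phase1_steps size_flatten /shape -map_comp sumnE big_map.
apply: leq_trans (_ : \sum_(c <- enum 'I_n) n <= _).
  apply: leq_sum => c _ /=.
  by rewrite size_map size_filter (leq_trans (count_size _ _)) ?size_enum_ord.
by rewrite big_enum sum_nat_const card_ord.
Qed.

Lemma phase1_gives n x : x \in phase1_steps n -> x.2.
Proof. by case/flattenP => s /mapP [c _ ->] /mapP [j _ ->]. Qed.

(* [M] bounds the number of items allocated by phase 1 and the first [K] rounds. *)
Lemma GARR_top n m (P : profile n m) (i : 'I_n) K :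
  let M := n * n + K * n in
  (forall c g, c != i -> P i g < K -> M <= P c g < m - M) -> M + K <= m ->
  forall g, P i g < K -> GARR P g = Some i.
Proof.
move=> M middle budget g g_top; have Km : K <= m by lia.
set pre := phase1_steps n ++ flatten (nseq K (round_steps n)).
have count_pre : count_mem (i, i, false) pre = K.
  rewrite count_cat count_rounds (@eq_in_count _ _ pred0) ?count_pred0 // => x.
  by move/phase1_gives; case: x => [[c r] []] // _ /=; rewrite !xpair_eqE andbF.
have [owned _] : secured P i K K (foldl (step P) [ffun => None] pre).
  have := secured_foldl middle budget (r := 0) (A := [ffun => None]) (s := pre).
  rewrite count_pre add0n; apply.
  - rewrite all_cat; apply/andP; split; apply/allP => x.
      by rewrite /give_or_pick => /phase1_gives ->.
    by case/flattenP => s /nseqP [-> _] /mapP [c _ ->]; rewrite /give_or_pick /=.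
  - rewrite (_ : allocated _ = set0) ?cards0; last by apply/setP => h; rewrite !inE ffunE.
    by rewrite size_cat size_rounds add0n leq_add2r size_phase1.
  - by [].
  - by split=> h //; rewrite ffunE.
by rewrite /GARR (phase2_stepsE n Km) catA foldl_cat foldl_allocated owned.
Qed.

Lemma event_E_top n m (P : profile n m) (i j : 'I_n) k K : 0 < k <= K -> K <= m ->
  (forall g, P i g < K -> GARR P g = Some i) -> event_E P i j k = false.
Proof.
move=> /andP [k_gt0 kK] Km top_owned; rewrite /event_E.
case bj_def: kth_best => [bj|] //; case bi_def: kth_best => [bi|] //.
have := kth_best_rank_ge bj_def.
have := kth_best_rank_lt _ _ bi_def; rewrite k_gt0 (leq_trans kK Km) => /(_ isT).
have top_in g : P i g < k -> g \in bundle P i.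
  by move=> gk; rewrite inE top_owned //; apply: leq_trans kK.
by move=> /(_ top_in); lia.
Qed.

Section Counting.
Variables (n m : nat) (i : 'I_n).

Definition relative_rank_is (c : 'I_n) (s r : 'I_m) : {set profile n m} :=
  [set P : profile n m | P c (((P i)^-1)%g s) == r].

Lemma card_relative_rank_is c s r : c != i ->
  m * #|relative_rank_is c s r| = #|{: profile n m}|.
Proof.
move=> ci.
(* Right-multiplying c's ordering by the transposition (r1 r2) is an involution
   of profiles mapping relative rank r1 to r2. *)
have card_le r1 r2 : #|relative_rank_is c s r1| <= #|relative_rank_is c s r2|.
  pose swap (P : profile n m) : profile n m :=
    [ffun d => if d == c then (P d * tperm r1 r2)%g else P d].
  have swapK : involutive swap.
    move=> P; apply/ffunP => d; rewrite !ffunE; case: eqP => // ->.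
    by rewrite -mulgA tperm2 mulg1.
  rewrite -(card_imset _ (inv_inj swapK)); apply/subset_leq_card/subsetP => Q.
  case/imsetP => P; rewrite !inE => /eqP P_r1 ->.
  by rewrite !ffunE eqxx [i == c]eq_sym (negbTE ci) permM P_r1 tpermL.
rewrite -[RHS]sum1_card (partition_big (fun P : profile n m => P c (((P i)^-1)%g s)) xpredT) //=.
rewrite (eq_bigr (fun _ => #|relative_rank_is c s r|)) ?sum_nat_const ?card_ord 1?mulnC // => r' _.
rewrite sum1_card (_ : #|_| = #|relative_rank_is c s r'|); last by apply: eq_card => P; rewrite !inE.
by apply/eqP; rewrite eqn_leq !card_le.
Qed.

(* [(c, s, r)]: agent c puts i's item of rank s at rank r, outside [M, m - M). *)
Definition extreme_triples (K M : nat) : {set 'I_n * 'I_m * 'I_m} :=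
  [set x : 'I_n * 'I_m * 'I_m | [&& x.1.1 != i, x.1.2 < K & (x.2 < M) || (m - M <= x.2)]].

Lemma card_extreme_triples K M : M <= m -> #|extreme_triples K M| <= n * K * (M + M).
Proof.
move=> Mm.
apply: (@leq_trans #|setX (setX [set: 'I_n] [set s : 'I_m | s < K])
                         ([set r : 'I_m | r < M] :|: ~: [set r : 'I_m | r < m - M])|).
  apply/subset_leq_card/subsetP => -[[c s] r]; rewrite !inE /= -leqNgt.
  by case/and3P => _ -> ->.
rewrite !cardsX cardsT card_ord !card_ord_lt leq_mul ?leq_mul ?geq_minl //.
apply: leq_trans (leq_card_setU _ _) _.
by have := cardsC [set r : 'I_m | r < m - M]; rewrite card_ord !card_ord_lt; lia.
Qed.

Lemma middle_or_extreme (P : profile n m) K M :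
  (forall c g, c != i -> P i g < K -> M <= P c g < m - M) \/
  exists2 x, x \in extreme_triples K M & P \in relative_rank_is x.1.1 x.1.2 x.2.
Proof.
have [/exists_inP [x ? ?] | none] := boolP [exists x in extreme_triples K M,
                                            P \in relative_rank_is x.1.1 x.1.2 x.2].
  by right; exists x.
left=> c g ci g_top; apply: contraNT none => out.
apply/exists_inP; exists (c, P i g, P c g); last by rewrite inE /= permK.
by rewrite inE /= ci g_top /=; lia.
Qed.

Lemma card_extreme_profiles K M : m * #|\bigcup_(x in extreme_triples K M)
                                   relative_rank_is x.1.1 x.1.2 x.2|
  <= #|extreme_triples K M| * #|{: profile n m}|.
Proof.
rewrite -sum_nat_const; apply: leq_trans (leq_mul (leqnn m) (card_bigcup_le _ _)) _.
rewrite big_distrr leq_sum //= => x; rewrite inE => /and3P [ci _ _].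
by rewrite card_relative_rank_is.
Qed.

End Counting.

Lemma card_envious_profiles n m (i : 'I_n) K (small : pred nat) :
  let M := n * n + K * n in
  M + K <= m -> (forall k, small k -> k <= K) ->
  m * #|[set P : profile n m | [exists k : 'I_m.+1, (0 < k) && small k
                               && [exists j : 'I_n, (j != i) && event_E P i j k]]]|
  <= n * K * (M + M) * #|{: profile n m}|.
Proof.
move=> M budget small_le; set Bad := [set P | _].
have bad_sub : Bad \subset
    \bigcup_(x in extreme_triples m i K M) relative_rank_is i x.1.1 x.1.2 x.2.
  apply/subsetP => P; rewrite inE => /existsP [k /andP [/andP [k_gt0 /small_le kK]]].
  case/existsP => j /andP [_ envy].
  have [middle | [x xX Px]] := middle_or_extreme i P K M; last by apply/bigcupP; exists x.
  move: envy; rewrite (@event_E_top _ _ P i j k K) ?k_gt0 ?kK //; first lia.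
  exact: GARR_top middle budget.
apply: leq_trans (leq_mul (leqnn m) (subset_leq_card bad_sub)) _.
apply: leq_trans (card_extreme_profiles m i K M) _.
by rewrite leq_mul2r card_extreme_triples ?orbT //; lia.
Qed.

Local Open Scope ring_scope.

Lemma rounds_budget_le (R : realType) (n L K m : R) :
  2 <= n -> 0 <= L -> 0 <= K -> K <= 32 * L + 4 * n ->
  (2 ^+ 11 * 33) * n ^+ 3 * L ^+ 2 + (2 ^+ 7 * 197) * n ^+ 4 * L
    + (2 * 11 * 107) * n ^+ 5 + 128 * n ^+ 2 * L + 24 * n ^+ 3 + 3 * n ^+ 2 + n <= m ->
  n * n + K * n + K <= m.
Proof.
move=> n_ge2 L_ge0 K_ge0 K_le; rewrite !exprS !expr0 !mulr1 => hN.
have n2L : 0 <= n * n * L by nra.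
have n3L2 : 0 <= n * (n * n) * (L * L) by nra.
have n4L : 0 <= n * (n * (n * n)) * L by nra.
have n2 : 4 <= n * n by nra.
have n3 : 8 <= n * (n * n) by nra.
have n4 : 16 <= n * (n * (n * n)) by nra.
have n5 : 32 <= n * (n * (n * (n * n))) by nra.
have KnK : K * (n + 1) <= (32 * L + 4 * n) * (n + 1) by nra.
have Ln : 32 * L * (n + 1) <= 128 * (n * n) * L by nra.
have n12 : 5 * (n * n) + 4 * n <= 2354 * (n * (n * (n * (n * n)))) by nra.
nra.
Qed.

Lemma envy_bound_le (R : realType) (n L K : R) :
  2 <= n -> 0 <= L -> 0 <= K -> K <= 32 * L + 4 * n ->
  n * K * ((n * n + K * n) + (n * n + K * n)) <=
  2 ^+ 11 * n ^+ 2 * L ^+ 2 + (2 ^+ 7 * 5) * n ^+ 3 * L + 50 * n ^+ 4.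
Proof.
move=> n_ge2 L_ge0 K_ge0 K_le; rewrite !exprS !expr0 !mulr1.
have n2 : 0 <= n * n by nra.
have n3 : 0 <= n * (n * n) by nra.
have K2 : n * n * (K * K) <= n * n * ((32 * L + 4 * n) * (32 * L + 4 * n)).
  by rewrite ler_wpM2l // ler_pM.
have K1 : n * (n * n) * K <= n * (n * n) * (32 * L + 4 * n) by rewrite ler_wpM2l.
have n3L : 0 <= n * (n * n) * L by nra.
have n4 : 0 <= n * (n * (n * n)) by nra.
nra.
Qed.

Theorem lemma4p11 (R : realType) (n q m : nat)
  (hn : (2 <= n)%N) (hq : (0 < q)%N) (hm : m = (q * n)%N)
  (hN : (2 ^+ 11 * 33) * n%:R ^+ 3 * ln (m%:R : R) ^+ 2 + (2 ^+ 7 * 197) * n%:R ^+ 4 * ln m%:R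
        + (2 * 11 * 107) * n%:R ^+ 5 + 128 * n%:R ^+ 2 * ln m%:R + 24 * n%:R ^+ 3
        + 3 * n%:R ^+ 2 + n%:R <= m%:R)
  (i : 'I_n) :
  (#|[set P : profile n m |
       [exists k : 'I_m.+1,
          (0 < k)%N && ((k : nat)%:R < 32 * ln (m%:R : R) + 4 * n%:R)
          && [exists j : 'I_n, (j != i) && event_E P i j k]]]|%:R
   / #|{: profile n m}|%:R : R)
  <= (2 ^+ 11 * n%:R ^+ 2 * ln m%:R ^+ 2 + (2 ^+ 7 * 5) * n%:R ^+ 3 * ln m%:R
      + 50 * n%:R ^+ 4) / m%:R.
Proof.
have m_gt0 : (0 < m)%N by rewrite hm muln_gt0 hq (leq_trans _ hn).
set L := ln (m%:R : R) in hN *.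
have L_ge0 : 0 <= L by rewrite ln_ge0 // ler1n.
have n_ge2 : (2 : R) <= n%:R by rewrite ler_nat.
set K := Num.truncn (32 * L + 4 * n%:R).
have K_le : (K%:R : R) <= 32 * L + 4 * n%:R by rewrite -truncn_ge_nat //; lra.
have budget : (n * n + K * n + K <= m)%N.
  by rewrite -(ler_nat R) !natrD !natrM; apply: rounds_budget_le hN.
have small_le (k : nat) : (k%:R : R) < 32 * L + 4 * n%:R -> (k <= K)%N.
  by move/ltW; rewrite truncn_ge_nat //; lra.
have := card_envious_profiles i budget small_le.
set Bad := [set P | _]; set N := #|{: profile n m}| => card_Bad.
have N_gt0 : (0 < N)%N by apply/card_gt0P; exists [ffun => 1%g].
rewrite ler_pdivrMr ?ltr0n // mulrAC ler_pdivlMr ?ltr0n //.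
apply: le_trans (_ : (n * K * ((n * n + K * n) + (n * n + K * n)) * N)%:R <= _).
  by rewrite -natrM ler_nat mulnC.
rewrite natrM ler_wpM2r // !natrM !natrD !natrM.
exact: envy_bound_le.
Qed.
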